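(* Let $\mathscr{Z}=[\mathscr{Z}_1,\dots,\mathscr{Z}_k]\in\mathbb{R}^{n\times ks\times n_3}$ with $\mathscr{Z}_j\in\mathbb{R}^{n\times s\times n_3}$ and $s<n$, and suppose the tubal-global Gram–Schmidt procedure described in the context runs to completion on $\mathscr{Z}$ (no normalization breaks down). Then $\mathscr{Z}=\mathscr{Q}\star(\mathscr{R}\circledast\mathscr{I}_{ssn_3})$, where $\mathscr{Q}=[\mathscr{Q}_1,\dots,\mathscr{Q}_k]\in\mathbb{R}^{n\times ks\times n_3}$ is T-orthonormal, satisfying $\mathscr{Q}^T\diamondsuit\mathscr{Q}=\mathscr{I}_{kkn_3}$, and $\mathscr{R}\in\mathbb{R}^{k\times k\times n_3}$ is the upper triangular tensor (every frontal slice upper triangular) whose $(i,j)$ tube is $\mathbf{r}_{i,j}$ for $i\le j$ and the zero tube for $i>j$.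
   Context: All tensors are real third-order arrays. For $\mathscr{A}\in\mathbb{R}^{n_1\times n_2\times n_3}$, $\widehat{\mathscr{A}}=\mathscr{A}\times_3F_{n_3}$ denotes the tensor obtained by applying the discrete Fourier transform ($F_{n_3}$ with entries $\omega^{(i-1)(j-1)}$, $\omega=e^{-2\pi\mathrm{i}/n_3}$) to each tube $\mathscr{A}(i,j,:)$; its frontal slices $\hat A^{(k)}$ are the Fourier slices. T-product: $\mathscr{A}\star\mathscr{B}$ has Fourier slices $\hat A^{(k)}\hat B^{(k)}$. Transpose $\mathscr{A}^T$: transpose each frontal slice and reverse the order of frontal slices $2,\dots,n_3$. $\mathscr{I}_{nnn_3}$: first frontal slice $I_n$, others zero. A tube is an element of $\mathbb{R}^{1\times1\times n_3}$; $\mathbf{e}$ is the tube with entries $(1,0,\dots,0)$. For a tube $\mathbf{a}$ and a tensor $\mathscr{B}$, $\mathbf{a}\divideontimes\mathscr{B}$ is the tensor whose $(i,j)$ tube is $\mathbf{a}\star\mathscr{B}(i,j,:)$. T-Kronecker product $\mathscr{A}\circledast\mathscr{B}$: Fourier slices $\hat A^{(k)}\otimes\hat B^{(k)}$. T-trace of a square-sliced tensor: the tube whose $k$-th Fourier slice is the trace of the $k$-th Fourier slice. Tubal inner product of $\mathscr{X},\mathscr{Y}\in\mathbb{R}^{n\times s\times n_3}$: $\langle\mathscr{X},\mathscr{Y}\rangle_T=\text{T-trace}(\mathscr{X}^T\star\mathscr{Y})$. T-diamond product: for $\mathscr{A}=[\mathscr{A}_1,\dots,\mathscr{A}_p]$,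 $\mathscr{B}=[\mathscr{B}_1,\dots,\mathscr{B}_\ell]$ (blocks in $\mathbb{R}^{n\times s\times n_3}$), $\mathscr{A}^T\diamondsuit\mathscr{B}\in\mathbb{R}^{p\times\ell\times n_3}$ has $(i,j)$ tube $\langle\mathscr{A}_i,\mathscr{B}_j\rangle_T$. Normalization of a nonzero $\mathscr{W}\in\mathbb{R}^{n\times s\times n_3}$: let $\mathbf{a}$ be the tube whose $k$-th Fourier coefficient is $\|\hat W^{(k)}\|_F$ (breakdown if some of these is zero/below tolerance) and let $\mathscr{Q}$ be the tensor with Fourier slices $\hat W^{(k)}/\|\hat W^{(k)}\|_F$; output $[\mathscr{Q},\mathbf{a}]$, so that $\mathscr{W}=\mathbf{a}\divideontimes\mathscr{Q}$ and $\langle\mathscr{Q},\mathscr{Q}\rangle_T=\mathbf{e}$. Tubal-global Gram–Schmidt procedure: $[\mathscr{Q}_1,\mathbf{r}_{1,1}]=\mathrm{Normalization}(\mathscr{Z}_1)$; for $j=2,\dots,k$: set $\mathscr{W}=\mathscr{Z}_j$; for $i=1,\dots,j-1$ set $\mathbf{r}_{i,j}=\langle\mathscr{Q}_i,\mathscr{W}\rangle_T$ and $\mathscr{W}\leftarrow\mathscr{W}-\mathbf{r}_{i,j}\divideontimes\mathscr{Q}_i$; then $[\mathscr{Q}_j,\mathbf{r}_{j,j}]=\mathrm{Normalization}(\mathscr{W})$. *)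

From HB Require Import structures.
From mathcomp Require Import all_boot all_order all_algebra.
From mathcomp Require Import reals trigo.
From mathcomp Require Import complex mxtens.

Set Implicit Arguments.
Unset Strict Implicit.
Unset Printing Implicit Defensive.

Import Order.TTheory GRing.Theory Num.Theory.
Local Open Scope ring_scope.
Local Open Scope complex_scope.

Section Tensors.
Variable R : realType.
Local Notation C := R[i].

(* A real third-order tensor in R^{n1 x n2 x n3}, stored by frontal slices:
   (A k) i j = A(i,j,k)   (0-based indices). *)
Definition tensor (n1 n2 n3 : nat) := {ffun 'I_n3 -> 'M[R]_(n1, n2)}.

Definition omega (n3 : nat) : C :=
  (cos (2 * pi / n3%:R)) -i* (sin (2 * pi / n3%:R)).

Definition cmx m n (A : 'M[R]_(m, n)) : 'M[C]_(m, n) :=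
  map_mx (fun x => x%:C) A.

(* Fourier slices \hat A^{(k)} of  \hat A = A x_3 F_{n3},
   (F_{n3})_{k,j} = omega^{k j} (0-based). *)
Definition fslice n1 n2 n3 (A : tensor n1 n2 n3) (k : 'I_n3) : 'M[C]_(n1, n2) :=
  \sum_(j < n3) (omega n3 ^+ (k * j)) *: cmx (A j).

(* The (real) tensor whose Fourier slices are X k: inverse DFT along the
   third mode (real part taken; it is exactly real whenever X is the family
   of Fourier slices of a real tensor, which is the case for every use below). *)
Definition of_fslices n1 n2 n3 (X : 'I_n3 -> 'M[C]_(n1, n2)) : tensor n1 n2 n3 :=
  [ffun j : 'I_n3 => map_mx (@complex.Re R)
     ((n3%:R)^-1 *: \sum_(k < n3) (omega n3 ^- (k * j)) *: X k)].

Definition tprod n1 n2 n4 n3 (A : tensor n1 n2 n3) (B : tensor n2 n4 n3)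
  : tensor n1 n4 n3 :=
  of_fslices (fun k => fslice A k *m fslice B k).

(* Transpose: transpose each frontal slice, reverse the order of slices 2..n3
   (0-based: slice k of A^T is (slice ((n3 - k) mod n3) of A)^T). *)
Definition rev_slice n3 (k : 'I_n3) : 'I_n3 :=
  Ordinal (ltn_pmod (n3 - k) (leq_ltn_trans (leq0n k) (ltn_ord k))).
Definition ttrans n1 n2 n3 (A : tensor n1 n2 n3) : tensor n2 n1 n3 :=
  [ffun k => (A (rev_slice k))^T].

Definition tid n n3 : tensor n n n3 :=
  [ffun k : 'I_n3 => if (k == 0 :> nat) then 1%:M else 0].

Definition tube n3 := tensor 1 1 n3.

Definition tube_at n1 n2 n3 (B : tensor n1 n2 n3) (i : 'I_n1) (j : 'I_n2)
  : tube n3 := [ffun k => (B k i j)%:M].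

Definition of_tubes p q n3 (T : 'I_p -> 'I_q -> tube n3) : tensor p q n3 :=
  [ffun k => \matrix_(i, j) T i j k 0 0].

Definition tubescal n1 n2 n3 (a : tube n3) (B : tensor n1 n2 n3)
  : tensor n1 n2 n3 :=
  of_tubes (fun i j => tprod a (tube_at B i j)).

Definition tkron m1 n1 m2 n2 n3 (A : tensor m1 n1 n3) (B : tensor m2 n2 n3)
  : tensor (m1 * m2) (n1 * n2) n3 :=
  of_fslices (fun k => fslice A k *t fslice B k).

Definition ttrace n n3 (M : tensor n n n3) : tube n3 :=
  of_fslices (fun k => (\tr (fslice M k))%:M).

Definition tinner n s n3 (X Y : tensor n s n3) : tube n3 :=
  ttrace (tprod (ttrans X) Y).

(* Block structure A = [A_1, ..., A_p] with A_j in R^{n x s x n3}: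
   column c of block j is column j*s + c of A. *)
Definition tblock n p s n3 (A : tensor n (p * s) n3) (j : 'I_p) : tensor n s n3 :=
  [ffun m => \matrix_(a, c) A m a (mxtens_index (j, c))].

Definition tconcat n p s n3 (F : 'I_p -> tensor n s n3) : tensor n (p * s) n3 :=
  [ffun m => \matrix_(a, col)
     F (mxtens_unindex col).1 m a (mxtens_unindex col).2].

Definition tdiamondT n p l s n3 (A : tensor n (p * s) n3) (B : tensor n (l * s) n3)
  : tensor p l n3 :=
  of_tubes (fun i j => tinner (tblock A i) (tblock B j)).

Definition frobC m n (M : 'M[C]_(m, n)) : R :=
  Num.sqrt (\sum_(i < m) \sum_(j < n) (complex.Re (M i j) ^+ 2 + complex.Im (M i j) ^+ 2)).

Definition normalization n s n3 (W : tensor n s n3) : tensor n s n3 * tube n3 :=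
  (of_fslices (fun k => ((frobC (fslice W k))^-1)%:C *: fslice W k),
   of_fslices (fun k => ((frobC (fslice W k))%:C)%:M)).

Definition normalizable n s n3 (W : tensor n s n3) : Prop :=
  forall k : 'I_n3, frobC (fslice W k) != 0.

(* Inner loop of the tubal-global Gram-Schmidt procedure: given the already
   computed Q_1..Q_{j-1} and W = Z_j, for i = 1..j-1:
   r_{i,j} = <Q_i, W>_T, W <- W - r_{i,j} (divideontimes) Q_i. *)
Definition gs_orth n s n3 (Qs : seq (tensor n s n3)) (W : tensor n s n3)
  : seq (tube n3) * tensor n s n3 :=
  foldl (fun acc Qi =>
           let r := tinner Qi acc.2 in (rcons acc.1 r, acc.2 - tubescal r Qi))
        ([::], W) Qs.

Section GS.
Variables (n s k n3 : nat) (Z : tensor n (k * s) n3).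

(* Z_{j+1} (0-based j), zero for j >= k *)
Definition gs_Z (j : nat) : tensor n s n3 :=
  if insub j is Some o then tblock Z o else 0.

Fixpoint gs_Qs (j : nat) : seq (tensor n s n3) :=
  if j is j'.+1 then
    let Qs := gs_Qs j' in rcons Qs (normalization (gs_orth Qs (gs_Z j')).2).1
  else [::].

Definition gs_W (j : nat) : tensor n s n3 := (gs_orth (gs_Qs j) (gs_Z j)).2.

Definition gs_r (i j : nat) : tube n3 :=
  if (i < j)%N then nth 0 (gs_orth (gs_Qs j) (gs_Z j)).1 i
  else if i == j then (normalization (gs_W j)).2
  else 0.

Definition gs_completes : Prop := forall j, (j < k)%N -> normalizable (gs_W j).

Definition gs_Q : tensor n (k * s) n3 :=
  tconcat (fun j : 'I_k => nth 0 (gs_Qs k) j).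

Definition gs_R : tensor k k n3 := of_tubes (fun i j : 'I_k => gs_r i j).

End GS.

Definition upper_tri p n3 (T : tensor p p n3) : Prop :=
  forall (m : 'I_n3) (i j : 'I_p), (j < i)%N -> T m i j = 0.

End Tensors.

From HB Require Import structures.
From mathcomp Require Import all_boot all_order all_algebra.
From mathcomp Require Import reals trigo.
From mathcomp Require Import complex mxtens.
From mathcomp Require Import ring lra.

Set Implicit Arguments.
Unset Strict Implicit.
Unset Printing Implicit Defensive.

Import Order.TTheory GRing.Theory Num.Theory.
Local Open Scope ring_scope.
Local Open Scope complex_scope.

(* The DFT along the third mode is invertible (the powers of omega are
   orthogonal) and turns the tubal operations into slice-wise matrix
   operations: T-product, T-Kronecker product, transpose, T-trace and tube
   scaling become product, Kronecker product, conjugate transpose, trace and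
   scalar multiplication of the Fourier slices.  Slice by slice, the
   tubal-global procedure is thus classical Gram-Schmidt for the Frobenius
   inner product tr (M^* N): the k-th Fourier slices of Q_1, ..., Q_k are
   orthonormal and that of Z_j is sum_i r_ij(k) Q_i(k), the slice-wise forms
   of the two identities.  Fourier slices of a real tensor satisfy
   X (n3 - k) = conj (X k); all slice-wise operations preserve this symmetry,
   which makes their inverse DFT real, so the real parts taken by
   [of_fslices] lose nothing. *)

Section RootOfUnity.
Variables (R : realType) (n3 : nat).
Local Notation w := (omega R n3).
Local Notation theta := (2 * pi / n3%:R : R).

Lemma omegaX m : w ^+ m = cos (m%:R * theta) -i* sin (m%:R * theta).
Proof.
elim: m => [|m IH]; first by rewrite expr0 !mul0r cos0 sin0 oppr0.
rewrite exprS IH /omega; set t := theta.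
rewrite -[m.+1]addn1 natrD mulrDl mul1r (addrC (m%:R * t)) cosD sinD.
by apply/eqP; rewrite eq_complex /=; apply/andP; split; apply/eqP; ring.
Qed.

Lemma omega_expr_order : (0 < n3)%N -> w ^+ n3 = 1.
Proof.
move=> n3_gt0; rewrite omegaX mulrCA mulfV ?pnatr_eq0 -?lt0n // mulr1.
by rewrite mulr_natl cos2pi sin2pi oppr0.
Qed.

(* [w ^+ m] has real part [cos (2 y)] with [0 < y < pi], hence below 1. *)
Lemma omegaX_neq1 m : (0 < m < n3)%N -> w ^+ m != 1.
Proof.
case/andP=> m_gt0 lt_m_n3; have n3_gt0 : (0 < n3)%N := ltn_trans m_gt0 lt_m_n3.
pose y : R := m%:R * pi / n3%:R.
have y_gt0 : 0 < y by rewrite divr_gt0 ?mulr_gt0 ?ltr0n ?pi_gt0.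
have y_ltpi : y < pi.
  by rewrite ltr_pdivrMr ?ltr0n // mulrC ltr_pM2l ?pi_gt0 ?ltr_nat.
have sin_y_gt0 : 0 < sin y ^+ 2 by rewrite exprn_gt0 // sin_gt0_pi ?y_gt0.
have theta_y : m%:R * theta = y *+ 2 by rewrite /y -mulr_natr; ring.
rewrite omegaX theta_y cos_mulr2n cos2sin2; apply/negP => /eqP[cos1 _].
by move: sin_y_gt0; rewrite -mulr_natr in cos1; lra.
Qed.

Lemma omega_prim : (0 < n3)%N -> n3.-primitive_root w.
Proof.
move=> n3_gt0.
have [m prim_m m_dvd] := prim_order_exists n3_gt0 (omega_expr_order n3_gt0).
suff n3_eq : n3 = m by rewrite {1}n3_eq.
have le_m_n3 : (m <= n3)%N := dvdn_leq n3_gt0 m_dvd.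
apply/eqP; rewrite eqn_leq le_m_n3 andbT leqNgt; apply/negP => lt_m_n3.
have /negP[] : w ^+ m != 1 by rewrite omegaX_neq1 ?(prim_order_gt0 prim_m).
exact/eqP/(prim_expr_order prim_m).
Qed.

Lemma omega_conj : conjc w = w^-1.
Proof.
have w_norm1 : conjc w * w = 1.
  rewrite /omega /conjc; apply/eqP; rewrite eq_complex /=.
  have := cos2Dsin2 theta; rewrite !expr2 => h.
  by apply/andP; split; apply/eqP; [lra | ring].
by apply/esym/mulr1_eq; rewrite mulrC.
Qed.

Lemma conj_omegaX m : conjc (w ^+ m) = w ^- m.
Proof. by rewrite -exprVn -omega_conj rmorphXn. Qed.

Lemma rev_sliceK : involutive (@rev_slice n3).
Proof.
move=> [k lt_k_n3]; apply: val_inj => /=.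
have [-> | k_gt0] := posnP k; first by rewrite subn0 modnn subn0 modnn.
have lt_n3k_n3 : (n3 - k < n3)%N by rewrite ltn_subrL k_gt0 (ltn_trans k_gt0).
by rewrite (modn_small lt_n3k_n3) subKn ?modn_small // ltnW.
Qed.

Lemma omegaX_rev (k : 'I_n3) j : w ^+ (rev_slice k * j) = w ^- (k * j).
Proof.
have n3_gt0 : (0 < n3)%N := leq_ltn_trans (leq0n k) (ltn_ord k).
have w_prim := omega_prim n3_gt0.
have wkj_neq0 : w ^+ (k * j) != 0 by rewrite expf_neq0 // (prim_root_eq0 w_prim) -lt0n.
apply: (mulIf wkj_neq0); rewrite mulVf // -exprD -mulnDl.
apply/eqP; rewrite -(prim_order_dvd w_prim) dvdn_mulr //=.
by rewrite /dvdn modnDml subnK ?modnn // ltnW.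
Qed.

Lemma omega_ortho (a b : 'I_n3) :
  \sum_(j < n3) w ^+ (j * a) * w ^- (j * b) = (a == b)%:R * n3%:R.
Proof.
have n3_gt0 : (0 < n3)%N := leq_ltn_trans (leq0n a) (ltn_ord a).
have w_prim := omega_prim n3_gt0.
have wb_neq0 : w ^+ b != 0 by rewrite expf_neq0 // (prim_root_eq0 w_prim) -lt0n.
pose z := w ^+ a / w ^+ b.
have zE j : w ^+ (j * a) * w ^- (j * b) = z ^+ j.
  by rewrite exprMn exprVn -!exprM !(mulnC j).
under eq_bigr => j _ do rewrite zE.
have [eq_ab | neq_ab] := eqVneq a b.
  rewrite /z eq_ab mulfV //.
  rewrite (eq_bigr (fun=> 1)) => [|j _]; last exact: expr1n.
  by rewrite sumr_const card_ord mul1r.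
(* [z] is an [n3]-th root of unity other than 1, so its powers sum to 0. *)
have zn1 : z ^+ n3 = 1.
  rewrite exprMn exprVn -!exprM !(mulnC _ n3) !exprM (prim_expr_order w_prim).
  by rewrite !expr1n invr1 mulr1.
have z_neq1 : z != 1.
  rewrite /z -[_ / _ == 1](inj_eq (mulIf wb_neq0)) mulfVK // mul1r.
  by rewrite (eq_prim_root_expr w_prim) !modn_small.
have := subrX1 z n3; rewrite zn1 subrr => /esym /eqP.
by rewrite mulf_eq0 subr_eq0 (negPf z_neq1) mul0r => /eqP.
Qed.

End RootOfUnity.

Section DFT.
Variables (R : realType) (n3 : nat).
Local Notation C := R[i].
Local Notation w := (omega R n3).

(* [fslice A] is [dft] applied to the slices of [A], and [of_fslices X] is the
   real part of [idft X]; both hold by conversion. *)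
Definition dft m n (Y : 'I_n3 -> 'M[C]_(m, n)) (k : 'I_n3) : 'M[C]_(m, n) :=
  \sum_(j < n3) w ^+ (k * j) *: Y j.

Definition idft m n (X : 'I_n3 -> 'M[C]_(m, n)) (j : 'I_n3) : 'M[C]_(m, n) :=
  n3%:R^-1 *: \sum_(k < n3) w ^- (k * j) *: X k.

Lemma scale_sum_delta m n (X : 'I_n3 -> 'M[C]_(m, n)) (k : 'I_n3) :
  n3%:R^-1 *: \sum_(k' < n3) ((k' == k)%:R * n3%:R) *: X k' = X k.
Proof.
rewrite (bigD1 k) //= big1 => [|k' /negPf->]; last by rewrite mul0r scale0r.
rewrite eqxx mul1r addr0 scalerA mulVf ?scale1r // pnatr_eq0 -lt0n.
exact: leq_ltn_trans (leq0n k) (ltn_ord k).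
Qed.

Lemma idftK m n (X : 'I_n3 -> 'M[C]_(m, n)) k : dft (idft X) k = X k.
Proof.
rewrite -[RHS](scale_sum_delta X k) /dft /idft.
under eq_bigr => j _ do rewrite scalerA mulrC -scalerA scaler_sumr.
rewrite -scaler_sumr exchange_big /=; congr (_ *: _); apply: eq_bigr => k' _.
rewrite eq_sym -omega_ortho scaler_suml; apply: eq_bigr => j _.
by rewrite scalerA !(mulnC j).
Qed.

Lemma dftK m n (Y : 'I_n3 -> 'M[C]_(m, n)) j : idft (dft Y) j = Y j.
Proof.
rewrite -[RHS](scale_sum_delta Y j) /dft /idft; congr (_ *: _).
under eq_bigr => k _ do rewrite scaler_sumr.
rewrite exchange_big /=; apply: eq_bigr => j' _.
rewrite -omega_ortho scaler_suml; apply: eq_bigr => k _.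
by rewrite scalerA mulrC.
Qed.

End DFT.

Section Fourier.
Variable R : realType.
Local Notation C := R[i].
Local Notation conjm M := (map_mx conjc M).

Lemma conjmZ m n (c : C) (M : 'M[C]_(m, n)) : conjm (c *: M) = conjc c *: conjm M.
Proof. by apply/matrixP => a b; rewrite !mxE rmorphM. Qed.

Definition hermitian n1 n2 n3 (X : 'I_n3 -> 'M[C]_(n1, n2)) :=
  forall k, X (rev_slice k) = conjm (X k).

Lemma fslice_entry n1 n2 n3 (A : tensor R n1 n2 n3) k a b :
  fslice A k a b = \sum_(j < n3) omega R n3 ^+ (k * j) * (A j a b)%:C.
Proof. by rewrite summxE; apply: eq_bigr => j _; rewrite !mxE. Qed.

Lemma fslice_hermitian n1 n2 n3 (A : tensor R n1 n2 n3) : hermitian (fslice A).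
Proof.
move=> k; rewrite map_mx_sum; apply: eq_bigr => j _.
rewrite conjmZ omegaX_rev conj_omegaX; congr (_ *: _).
by apply/matrixP => a b; rewrite !mxE conjc_real.
Qed.

Lemma idft_real n1 n2 n3 (X : 'I_n3 -> 'M[C]_(n1, n2)) j :
  hermitian X -> conjm (idft X j) = idft X j.
Proof.
move=> herm_X; rewrite conjmZ map_mx_sum conjc_inv conjc_nat; congr (_ *: _).
rewrite [RHS](reindex_inj (inv_inj (@rev_sliceK n3))) /=; apply: eq_bigr => k _.
by rewrite conjmZ conjc_inv conj_omegaX omegaX_rev invrK herm_X.
Qed.

Lemma real_cmx_Re m n (M : 'M[C]_(m, n)) :
  conjm M = M -> cmx (map_mx (@complex.Re R) M) = M.
Proof.
move=> /matrixP real_M; apply/matrixP => a b; have := real_M a b.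
rewrite !mxE ReJ_add => ->.
by rewrite -mulr2n -[_ *+ 2]mulr_natr mulfK // pnatr_eq0.
Qed.

Lemma fslice_of_fslices n1 n2 n3 (X : 'I_n3 -> 'M[C]_(n1, n2)) k :
  hermitian X -> fslice (of_fslices X) k = X k.
Proof.
move=> herm_X; rewrite -[RHS](idftK X) /fslice.
by apply: eq_bigr => j _; rewrite ffunE real_cmx_Re ?idft_real.
Qed.

Lemma fsliceK n1 n2 n3 (A : tensor R n1 n2 n3) : of_fslices (fslice A) = A.
Proof.
apply/ffunP => j; rewrite ffunE [X in map_mx _ X](dftK (fun j => cmx (A j))).
by apply/matrixP => a b; rewrite !mxE.
Qed.

Lemma fslice_inj n1 n2 n3 (A B : tensor R n1 n2 n3) :
  (forall k, fslice A k = fslice B k) -> A = B.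
Proof.
move=> eq_AB; rewrite -(fsliceK A) -(fsliceK B).
by apply/ffunP => j; rewrite !ffunE; under eq_bigr do rewrite eq_AB.
Qed.

Lemma fslice_tprod n1 n2 n4 n3 (A : tensor R n1 n2 n3) (B : tensor R n2 n4 n3) k :
  fslice (tprod A B) k = fslice A k *m fslice B k.
Proof. by rewrite fslice_of_fslices // => k'; rewrite !fslice_hermitian map_mxM. Qed.

Lemma fslice_tkron m1 n1 m2 n2 n3 (A : tensor R m1 n1 n3) (B : tensor R m2 n2 n3) k :
  fslice (tkron A B) k = fslice A k *t fslice B k.
Proof. by rewrite fslice_of_fslices // => k'; rewrite !fslice_hermitian map_mxT. Qed.

Lemma fslice_ttrace n n3 (M : tensor R n n n3) k :
  fslice (ttrace M) k = (\tr (fslice M k))%:M.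
Proof.
rewrite fslice_of_fslices // => k'.
by rewrite fslice_hermitian map_scalar_mx trace_map_mx.
Qed.

Lemma fslice_ttrans n1 n2 n3 (A : tensor R n1 n2 n3) k :
  fslice (ttrans A) k = (conjm (fslice A k))^T.
Proof.
rewrite -fslice_hermitian; apply/matrixP => a b; rewrite !mxE !fslice_entry.
rewrite (reindex_inj (inv_inj (@rev_sliceK n3))) /=; apply: eq_bigr => j _.
by rewrite ffunE rev_sliceK !mxE (mulnC k) !omegaX_rev (mulnC j).
Qed.

Lemma fslice_of_tubes p q n3 (T : 'I_p -> 'I_q -> tube R n3) k :
  fslice (of_tubes T) k = \matrix_(i, j) fslice (T i j) k 0 0.
Proof.
apply/matrixP => a b; rewrite mxE !fslice_entry.
by apply: eq_bigr => j _; rewrite ffunE mxE.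
Qed.

Lemma fslice_tube_at n1 n2 n3 (B : tensor R n1 n2 n3) i j k :
  fslice (tube_at B i j) k = (fslice B k i j)%:M.
Proof.
apply/matrixP => a b; rewrite !ord1 [RHS]mxE eqxx mulr1n !fslice_entry.
by apply: eq_bigr => j' _; rewrite ffunE mxE eqxx mulr1n.
Qed.

Lemma fslice_tblock n p s n3 (A : tensor R n (p * s) n3) j k :
  fslice (tblock A j) k = \matrix_(a, c) fslice A k a (mxtens_index (j, c)).
Proof.
apply/matrixP => a c; rewrite mxE !fslice_entry.
by apply: eq_bigr => j' _; rewrite ffunE mxE.
Qed.

Lemma fslice0 n1 n2 n3 k : fslice (0 : tensor R n1 n2 n3) k = 0.
Proof.
apply/matrixP => a b; rewrite fslice_entry mxE big1 // => j _.
by rewrite ffunE mxE mulr0.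
Qed.

Lemma fsliceB n1 n2 n3 (A B : tensor R n1 n2 n3) k :
  fslice (A - B) k = fslice A k - fslice B k.
Proof.
apply/matrixP => a b; rewrite !mxE !fslice_entry -sumrB.
by apply: eq_bigr => j _; rewrite !ffunE !mxE rmorphB mulrBr.
Qed.

Lemma fslice_tid n n3 k : fslice (tid R n n3) k = 1%:M.
Proof.
have n3_gt0 : (0 < n3)%N := leq_ltn_trans (leq0n k) (ltn_ord k).
apply/matrixP => a b; rewrite fslice_entry (bigD1 (Ordinal n3_gt0)) //= big1.
  by rewrite ffunE /= muln0 expr0 mul1r addr0 !mxE; case: (a == b).
by move=> j j_neq0; rewrite ffunE ifN ?mxE ?mulr0.
Qed.

Lemma fslice_tubescal n1 n2 n3 (a : tube R n3) (B : tensor R n1 n2 n3) k :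
  fslice (tubescal a B) k = fslice a k 0 0 *: fslice B k.
Proof.
apply/matrixP => i j.
rewrite fslice_of_tubes !mxE fslice_tprod fslice_tube_at mul_mx_scalar.
by rewrite !mxE mulrC.
Qed.

Definition fdot m n (M N : 'M[C]_(m, n)) : C := \tr ((conjm M)^T *m N).

Lemma fslice_tinner n s n3 (X Y : tensor R n s n3) k :
  fslice (tinner X Y) k = (fdot (fslice X k) (fslice Y k))%:M.
Proof. by rewrite fslice_ttrace fslice_tprod fslice_ttrans. Qed.

Lemma fdotBr m n (M N1 N2 : 'M[C]_(m, n)) : fdot M (N1 - N2) = fdot M N1 - fdot M N2.
Proof. by rewrite /fdot mulmxBr linearB. Qed.

Lemma fdotZr m n (M N : 'M[C]_(m, n)) c : fdot M (c *: N) = c * fdot M N.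
Proof. by rewrite /fdot -scalemxAr linearZ. Qed.

Lemma fdotZl m n (M N : 'M[C]_(m, n)) c : fdot (c *: M) N = conjc c * fdot M N.
Proof. by rewrite /fdot conjmZ linearZ /= -scalemxAl linearZ. Qed.

Lemma fdotC m n (M N : 'M[C]_(m, n)) : fdot N M = conjc (fdot M N).
Proof.
rewrite /fdot -mxtrace_tr trmx_mul trmxK -trace_map_mx map_mxM map_trmx.
by congr (\tr (_ *m _)); apply/matrixP => a b; rewrite !mxE; exact/esym/conjcK.
Qed.

Lemma fdot_self m n (M : 'M[C]_(m, n)) : fdot M M = (frobC M ^+ 2)%:C.
Proof.
rewrite sqr_sqrtr; last by do 2!(apply: sumr_ge0 => ? _); rewrite addr_ge0 ?sqr_ge0.
rewrite /fdot /mxtrace; under eq_bigr => c _ do rewrite mxE.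
rewrite exchange_big raddf_sum; apply: eq_bigr => a _.
rewrite raddf_sum; apply: eq_bigr => c _; rewrite !mxE.
case: (M a c) => x y; apply/eqP; rewrite eq_complex /=.
by apply/andP; split; apply/eqP; ring.
Qed.

Lemma frobC_conj m n (M : 'M[C]_(m, n)) : frobC (conjm M) = frobC M.
Proof.
congr Num.sqrt; do 2!(apply: eq_bigr => ? _).
by rewrite mxE; case: (M _ _) => x y /=; rewrite sqrrN.
Qed.

Lemma fslice_normalization_Q n s n3 (W : tensor R n s n3) k :
  fslice (normalization W).1 k = (frobC (fslice W k))^-1%:C *: fslice W k.
Proof.
rewrite fslice_of_fslices // => k'.
by rewrite fslice_hermitian frobC_conj conjmZ conjc_real.
Qed.

Lemma fslice_normalization_r n s n3 (W : tensor R n s n3) k :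
  fslice (normalization W).2 k = ((frobC (fslice W k))%:C)%:M.
Proof.
rewrite fslice_of_fslices // => k'.
by rewrite fslice_hermitian frobC_conj map_scalar_mx; congr _%:M; exact/esym/conjc_real.
Qed.

Lemma fdot_normalize m n (M : 'M[C]_(m, n)) :
  frobC M != 0 -> fdot ((frobC M)^-1%:C *: M) ((frobC M)^-1%:C *: M) = 1.
Proof.
move=> frob_neq0; rewrite fdotZl fdotZr fdot_self conjc_real -!rmorphM /=.
by rewrite mulrA -expr2 -exprMn mulVf ?expr1n.
Qed.

End Fourier.

Lemma mul_tensmx1 (R : pzRingType) m k l s
    (M : 'M[R]_(m, k * s)) (A : 'M[R]_(k, l)) a (j : 'I_l) (c : 'I_s) :
  (M *m (A *t 1%:M)) a (mxtens_index (j, c)) =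
  \sum_(i < k) M a (mxtens_index (i, c)) * A i j.
Proof.
rewrite mxE (reindex (@mxtens_index k s)) /=; last first.
  by exists (@mxtens_unindex k s) => ? _; rewrite (mxtens_indexK, mxtens_unindexK).
pose G i c' := M a (mxtens_index (i, c')) *
  (A *t 1%:M) (mxtens_index (i, c')) (mxtens_index (j, c)).
rewrite (eq_bigr (fun x => G x.1 x.2)) => [|[] //]; rewrite -pair_bigA /=.
apply: eq_bigr => i _; rewrite (bigD1 c) //= big1 /G => [|c' /negPf neq_c'].
  by rewrite tensmxE mxE eqxx mulr1 addr0.
by rewrite tensmxE mxE neq_c' mulr0 mulr0.
Qed.

Lemma tblock_tconcat (R : realType) n p s n3 (F : 'I_p -> tensor R n s n3) j :
  tblock (tconcat F) j = F j.
Proof.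
by apply/ffunP => m; apply/matrixP => a c; rewrite !ffunE !mxE mxtens_indexK.
Qed.

Section GramSchmidtStep.
Variables (R : realType) (n s n3 : nat).
Implicit Types (Qs : seq (tensor R n s n3)) (Q W : tensor R n s n3).

Definition orthonormal_at (k : 'I_n3) Qs :=
  forall i j, (i < size Qs)%N -> (j < size Qs)%N ->
  fdot (fslice (nth 0 Qs i) k) (fslice (nth 0 Qs j) k) = (i == j)%:R.

Lemma orthonormal_at_rcons k Qs Q :
  orthonormal_at k (rcons Qs Q) <->
  [/\ orthonormal_at k Qs, fdot (fslice Q k) (fslice Q k) = 1 &
      forall i, (i < size Qs)%N -> fdot (fslice (nth 0 Qs i) k) (fslice Q k) = 0].
Proof.
rewrite /orthonormal_at size_rcons.
split=> [ortho | [ortho unit_Q orth_Q] i j lt_i lt_j].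
  split=> [i j lt_i lt_j | | i lt_i].
  - by have := ortho i j; rewrite !nth_rcons lt_i lt_j; apply; apply: ltnW.
  - by have := ortho (size Qs) (size Qs); rewrite nth_rcons ltnn eqxx; apply.
  - have := ortho i (size Qs); rewrite !nth_rcons lt_i ltnn eqxx (ltn_eqF lt_i).
    by apply; rewrite // ltnW.
rewrite !nth_rcons.
have [lt_jQ | gt_jQ | eq_jQ] := ltngtP j (size Qs).
- have [lt_iQ | gt_iQ | ->] := ltngtP i (size Qs).
  + exact: ortho.
  + by rewrite ltnS leqNgt gt_iQ in lt_i.
  + by rewrite fdotC orth_Q // (gtn_eqF lt_jQ) conjc0.
- by rewrite ltnS leqNgt gt_jQ in lt_j.
- rewrite eq_jQ; have [lt_iQ | gt_iQ | _] := ltngtP i (size Qs).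
  + by rewrite orth_Q.
  + by rewrite ltnS leqNgt gt_iQ in lt_i.
  + by rewrite unit_Q.
Qed.

Lemma gs_orth_rcons Qs Q W :
  gs_orth (rcons Qs Q) W =
  (rcons (gs_orth Qs W).1 (tinner Q (gs_orth Qs W).2),
   (gs_orth Qs W).2 - tubescal (tinner Q (gs_orth Qs W).2) Q).
Proof. by rewrite /gs_orth foldl_rcons. Qed.

Lemma size_gs_orth Qs W : size (gs_orth Qs W).1 = size Qs.
Proof. by elim/last_ind: Qs => [//|Qs Q IH]; rewrite gs_orth_rcons !size_rcons IH. Qed.

Lemma fslice_gs_orth Qs W k :
  fslice (gs_orth Qs W).2 k =
  fslice W k -
  \sum_(i < size Qs) fslice (nth 0 (gs_orth Qs W).1 i) k 0 0 *: fslice (nth 0 Qs i) k.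
Proof.
elim/last_ind: Qs => [|Qs Q IH]; first by rewrite big_ord0 subr0.
rewrite gs_orth_rcons fsliceB fslice_tubescal IH size_rcons big_ord_recr /=.
under [in RHS]eq_bigr => i _ do rewrite !nth_rcons size_gs_orth ltn_ord.
by rewrite !nth_rcons size_gs_orth ltnn eqxx opprD addrA.
Qed.

Lemma gs_orth_orthogonal Qs W k : orthonormal_at k Qs ->
  forall i, (i < size Qs)%N ->
  fdot (fslice (nth 0 Qs i) k) (fslice (gs_orth Qs W).2 k) = 0.
Proof.
elim/last_ind: Qs => [//|Qs Q IH] /orthonormal_at_rcons[ortho unit_Q orth_Q] i.
rewrite size_rcons ltnS leq_eqVlt gs_orth_rcons fsliceB fslice_tubescal.
rewrite fslice_tinner mxE eqxx mulr1n fdotBr fdotZr nth_rcons.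
case/orP=> [/eqP-> | lt_i]; first by rewrite ltnn eqxx unit_Q mulr1 subrr.
by rewrite lt_i orth_Q // IH // mulr0 subrr.
Qed.

End GramSchmidtStep.

Section GramSchmidt.
Variables (R : realType) (n s K n3 : nat) (Z : tensor R n (K * s) n3).
Hypothesis gs_ok : gs_completes Z.

Local Notation Qhat p i := (fslice (normalization (gs_W Z i)).1 p).

Lemma size_gs_Qs j : size (gs_Qs Z j) = j.
Proof. by elim: j => [//|j IH] /=; rewrite size_rcons IH. Qed.

Lemma nth_gs_Qs j i : (i < j)%N -> nth 0 (gs_Qs Z j) i = (normalization (gs_W Z i)).1.
Proof.
elim: j => [//|j IH]; rewrite ltnS leq_eqVlt /= nth_rcons size_gs_Qs.
by case/orP=> [/eqP-> | lt_ij]; rewrite ?ltnn ?eqxx // lt_ij IH.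
Qed.

Lemma gs_Qs_orthonormal p j : (j <= K)%N -> orthonormal_at p (gs_Qs Z j).
Proof.
elim: j => [//|j IH] lt_jK /=; have ortho := IH (ltnW lt_jK).
apply/orthonormal_at_rcons; split=> //; rewrite fslice_normalization_Q.
  exact/fdot_normalize/gs_ok.
by move=> i lt_i; rewrite fdotZr gs_orth_orthogonal ?mulr0.
Qed.

Lemma gs_r_gt i j : (j < i)%N -> gs_r Z i j = 0.
Proof. by move=> lt_ji; rewrite /gs_r (leq_gtF (ltnW lt_ji)) (gtn_eqF lt_ji). Qed.

Lemma gs_Z_decomposition p j : (j < K)%N ->
  fslice (gs_Z Z j) p = \sum_(i < K) fslice (gs_r Z i j) p 0 0 *: Qhat p i.
Proof.
move=> lt_jK.
have W_eq : fslice (gs_W Z j) p = fslice (gs_r Z j j) p 0 0 *: Qhat p j.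
  rewrite /gs_r ltnn eqxx fslice_normalization_r fslice_normalization_Q mxE eqxx.
  by rewrite mulr1n scalerA -rmorphM mulfV ?scale1r ?gs_ok.
have r_eq (i : 'I_j) : gs_r Z i j = nth 0 (gs_orth (gs_Qs Z j) (gs_Z Z j)).1 i.
  by rewrite /gs_r ltn_ord.
transitivity (\sum_(i < j) fslice (gs_r Z i j) p 0 0 *: Qhat p i +
              fslice (gs_r Z j j) p 0 0 *: Qhat p j).
  rewrite -W_eq /gs_W fslice_gs_orth size_gs_Qs.
  under eq_bigr => i _ do rewrite r_eq -(nth_gs_Qs (ltn_ord i)).
  by rewrite addrC subrK.
transitivity (\sum_(i < K | (i < j.+1)%N) fslice (gs_r Z i j) p 0 0 *: Qhat p i).
  rewrite -(big_ord_widen K (fun i => fslice (gs_r Z i j) p 0 0 *: Qhat p i) lt_jK).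
  by rewrite big_ord_recr /=.
rewrite big_mkcond; apply: eq_bigr => i _.
case: (ltnP i j.+1) => [_ | lt_ji]; first reflexivity.
by rewrite (gs_r_gt lt_ji) fslice0 mxE scale0r.
Qed.

Lemma gs_Z_block (j : 'I_K) : gs_Z Z j = tblock Z j.
Proof. by rewrite /gs_Z; case: insubP => [o _ /val_inj -> | ]; rewrite ?ltn_ord. Qed.

Lemma tblock_gs_Q (i : 'I_K) : tblock (gs_Q Z) i = nth 0 (gs_Qs Z K) i.
Proof. exact: tblock_tconcat. Qed.

Lemma fslice_gs_R p (i j : 'I_K) : fslice (gs_R Z) p i j = fslice (gs_r Z i j) p 0 0.
Proof. by rewrite fslice_of_tubes mxE. Qed.

Lemma gs_R_upper_tri : upper_tri (gs_R Z).
Proof. by move=> m i j lt_ji; rewrite ffunE mxE (gs_r_gt lt_ji) ffunE mxE. Qed.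

Lemma fslice_tblock_gs_decomposition p (j : 'I_K) :
  fslice (tblock Z j) p =
  \sum_(i < K) fslice (gs_R Z) p i j *: fslice (tblock (gs_Q Z) i) p.
Proof.
rewrite -gs_Z_block gs_Z_decomposition //; apply: eq_bigr => i _.
by rewrite fslice_gs_R tblock_gs_Q nth_gs_Qs.
Qed.

Lemma gs_Q_orthonormal : tdiamondT (gs_Q Z) (gs_Q Z) = tid R K n3.
Proof.
apply: fslice_inj => p; rewrite fslice_tid; apply/matrixP => i j.
rewrite fslice_of_tubes !mxE fslice_tinner !tblock_gs_Q mxE eqxx mulr1n.
by apply: gs_Qs_orthonormal; rewrite ?size_gs_Qs.
Qed.

Lemma gs_QR : Z = tprod (gs_Q Z) (tkron (gs_R Z) (tid R s n3)).
Proof.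
apply: fslice_inj => p; apply/matrixP => a col; case: (mxtens_indexP col) => j c.
rewrite fslice_tprod fslice_tkron fslice_tid mul_tensmx1.
move/matrixP/(_ a c): (fslice_tblock_gs_decomposition p j).
rewrite fslice_tblock mxE => ->; rewrite summxE; apply: eq_bigr => i _.
by rewrite !mxE fslice_tblock mxE mulrC.
Qed.

End GramSchmidt.

Theorem proposition5 (R : realType) (n s k n3 : nat)
    (Z : tensor R n (k * s) n3) :
  (s < n)%N ->
  gs_completes Z ->
  Z = tprod (gs_Q Z) (tkron (gs_R Z) (tid R s n3)) /\
  tdiamondT (gs_Q Z) (gs_Q Z) = tid R k n3 /\
  upper_tri (gs_R Z).
Proof.
move=> _ gs_ok; split; first exact: gs_QR gs_ok.
by split; [exact: gs_Q_orthonormal gs_ok | exact: gs_R_upper_tri].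
Qed.
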